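(* Let $N\ge1$, $a_i>0$ with $\sum_{i=1}^Na_i=1$, and $x_i\in\mathsf X$ with $x_i\ne x_j$ for $i\ne j$; set $\bar\mu=\sum_{i=1}^Na_i\delta_{x_i}$. Let $\mu:[0,+\infty)\to\mathcal P_2(\mathsf X)$ with $\mu_0=\bar\mu$ be such that $\#\operatorname{supp}(\mu_t)$ is finite and non-increasing in $t\ge0$. Assume that $\boldsymbol\eta\in\mathcal P(\mathrm C([0,+\infty);\mathsf X))$ satisfies $(\mathsf e_t)_\sharp\boldsymbol\eta=\mu_t$ for every $t\ge0$. Then $\boldsymbol\eta=\sum_{i=1}^Na_i\delta_{\gamma_i}$ for curves $\gamma_i\in\mathrm C([0,+\infty);\mathsf X)$ such that (P1) $\gamma_i\ne\gamma_j$ for $i\ne j$; (P2) $\gamma_i(0)=x_i$, $i=1,\dots,N$; (P3) if $\gamma_i(s)=\gamma_j(s)$ for some $s\ge0$ and $i\ne j$, then $\gamma_i(t)=\gamma_j(t)$ for every $t\ge s$. In particular, if $\boldsymbol\eta_1,\boldsymbol\eta_2\in\mathcal P(\mathrm C([0,+\infty);\mathsf X))$ satisfy $(\mathsf e_t)_\sharp\boldsymbol\eta_1=(\mathsf e_t)_\sharp\boldsymbol\eta_2=\mu_t$ for every $t\ge0$, then $\boldsymbol\eta_1=\boldsymbol\eta_2$.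
   Context: $\mathsf X$ is a separable Hilbert space; $\mathrm C([0,+\infty);\mathsf X)$ carries the topology of uniform convergence on compact sets and $\mathcal P(\cdot)$ denotes Borel probability measures; $\mathsf e_t(\gamma)=\gamma(t)$; $\operatorname{supp}$ is the support of a measure. *)

From HB Require Import structures.
From mathcomp Require Import all_boot all_order all_algebra.
From mathcomp Require Import all_classical all_reals all_analysis.
Set Implicit Arguments. Unset Strict Implicit. Unset Printing Implicit Defensive.
Import Order.TTheory GRing.Theory Num.Theory.
Import numFieldNormedType.Exports.
Local Open Scope classical_set_scope.
Local Open Scope ring_scope.

Definition is_inner_product (R : realType) (X : normedModType R)
  (ip : X -> X -> R) : Prop :=
  (forall x y, ip x y = ip y x) /\
  (forall a x y z, ip (a *: x + y) z = a * ip x z + ip y z) /\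
  (forall x, ip x x = `|x| ^+ 2).

Definition separable (T : topologicalType) : Prop :=
  exists D : set T, countable D /\ dense D.

Definition borel (T : topologicalType) := g_sigma_algebraType (@open T).

(* C([0,+oo); X), encoded by the canonical representative which is
   continuous on R and constant (= gamma 0) on (-oo, 0]. *)
Definition is_curve (R : realType) (X : normedModType R) (g : R -> X) : Prop :=
  continuous g /\ (forall t, t <= 0 -> g t = g 0).

Definition curve (R : realType) (X : normedModType R) :=
  {g : R -> X | is_curve g}.

Lemma cst0_curve (R : realType) (X : normedModType R) :
  is_curve (fun _ : R => (0 : X)).
Proof. by split => // t; exact: cvg_cst. Qed.

HB.instance Definition _ (R : realType) (X : normedModType R) :=
  gen_eqMixin (curve X).
HB.instance Definition _ (R : realType) (X : normedModType R) :=
  gen_choiceMixin (curve X).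
HB.instance Definition _ (R : realType) (X : normedModType R) :=
  isPointed.Build (curve X) (exist _ _ (@cst0_curve R X)).

Definition ev (R : realType) (X : normedModType R) (t : R) (g : curve X) : X :=
  proj1_sig g t.

(* open sets of the topology of uniform convergence on compact subsets
   of [0,+oo) *)
Definition curve_open (R : realType) (X : normedModType R) (U : set (curve X)) :=
  forall g, U g -> exists T eps : R, 0 < eps /\
    forall h : curve X, (forall t, 0 <= t <= T -> `|ev t h - ev t g| < eps) -> U h.

Definition curve_borel (R : realType) (X : normedModType R) :=
  g_sigma_algebraType (@curve_open R X).

Definition supp (R : realType) (X : normedModType R)
  (mu : set (borel X) -> \bar R) : set X :=
  [set x | forall U : set X, open U -> U x -> (0 < mu U)%E].

Definition finite_second_moment (R : realType) (X : normedModType R)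
  (mu : probability (borel X) R) : Prop :=
  (\int[mu]_(x in [set: borel X]) ((`|(x : X)| ^+ 2)%:E) < +oo)%E.

Definition push_ev (R : realType) (X : normedModType R) (t : R)
  (eta : probability (curve_borel X) R) (mu : probability (borel X) R) : Prop :=
  forall A : set (borel X), measurable A ->
    eta (@ev R X t @^-1` A) = mu A.

From HB Require Import structures.
From mathcomp Require Import all_boot all_order all_algebra.
From mathcomp Require Import all_classical all_reals all_analysis.
Import Order.TTheory GRing.Theory Num.Theory.
Import numFieldNormedType.Exports.
Local Open Scope classical_set_scope.
Local Open Scope ring_scope.

(* Call a curve supported when it lies in supp mu_t at every rational time
   t >= 0.  Each supp mu_t has full mu_t-measure (X is separable), so
   eta-almost every curve is supported; and since every point of the finite
   set supp mu_t is an atom of mu_t, some supported curve passes through it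
   at time t.
   Supported curves cannot branch.  Suppose two of them meet at time s and
   differ at t > s, and let sigma be their last meeting time before t.  Take
   supported curves through the #supp mu_sigma points, the first of the two
   curves among them, and add the second one: by continuity and the choice
   of sigma, these #supp mu_sigma + 1 supported curves stay pairwise distinct
   on some interval (sigma, sigma + e).
   At a rational time q of that interval they occupy more than
   #supp mu_sigma >= #supp mu_q points of supp mu_q, which is absurd.
   Hence a supported curve is determined by its initial point, which is one
   of the x_i, and eta is the sum of the a_i-weighted Dirac masses at the
   supported curves issued from the x_i. *)

Lemma leq_card_inj_into {T : Type} {S : set T} {k : nat} {I : finType}
    (z : I -> T) :
  (S #= `I_k)%card -> injective z -> (forall i, S (z i)) -> (#|I| <= k)%N.
Proof.
move=> Sk zinj zS.
have enumT : enum_val @` [set: 'I_#|I|] = [set: I].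
  by apply/seteqP; split=> // i _; exists (enum_rank i) => //; rewrite enum_rankK.
have zI : (z @` [set: I] #= [set: I])%card by apply: inj_card_eq; exact: in2W.
have II : (enum_val @` [set: 'I_#|I|] #= [set: 'I_#|I|])%card.
  by apply: inj_card_eq; apply: in2W; exact: enum_val_inj.
rewrite -card_le_II (card_le_eql card_II) -(card_le_eql II) enumT.
rewrite -(card_le_eql zI) -(card_le_eqr Sk).
by apply: subset_card_le => _ [i _ <-]; exact: zS.
Qed.

Lemma near_at_right (R : realType) (x : R) (P : R -> Prop) :
  (\forall u \near x, P u) -> \forall u \near x^'+, P u.
Proof. by move=> xP; rewrite near_withinE; apply: filterS xP. Qed.

Lemma near_right_rat (R : realType) (x : R) (P : R -> Prop) :
  (\forall u \near x^'+, P u) -> exists2 q : rat, x < ratr q & P (ratr q).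
Proof.
rewrite near_withinE => /nbhs_ballP[e /= e0 xeP].
have /rat_in_itvoo[q] : x < x + e by rewrite ltrDl.
rewrite in_itv /= => /andP[xq qe]; exists q => //; apply: xeP => //.
by rewrite -ball_normE /ball_ /= ltr0_norm ?subr_lt0 // opprB ltrBlDl.
Qed.

Section NormedSpace.
Context {R : realType} {X : normedModType R}.

Lemma finite_set_closed (A : set X) : finite_set A -> closed A.
Proof.
apply: (accessible_finite_set_closed (T := X)).1.
exact/hausdorff_accessible/norm_hausdorff.
Qed.

Lemma near_neq (T : topologicalType) (f g : T -> X) (s : T) :
  {for s, continuous f} -> {for s, continuous g} -> f s != g s ->
  \forall u \near s, f u != g u.
Proof.
move=> fs gs fgs; have /cvgr_neq0 : (f \- g) @ s --> f s - g s by apply: cvgB.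
rewrite subr_eq0 => /(_ fgs); apply: filterS => u; by rewrite subr_eq0.
Qed.

Lemma last_coincidence {f g : R -> X} {s t : R} :
  continuous f -> continuous g -> s <= t -> f s = g s -> f t != g t ->
  exists sigma, [/\ s <= sigma, sigma < t, f sigma = g sigma &
    forall u, sigma < u <= t -> f u != g u].
Proof.
move=> fc gc st fgs fgt.
pose E := [set u | s <= u <= t /\ f u = g u].
have hE : has_sup E.
  by split; [exists s; split; rewrite ?lexx ?st | exists t => u [/andP[]]].
have cE : closed E.
  have -> : E = `[s, t] `&` (f \- g) @^-1` [set 0].
    apply/seteqP; split=> u; rewrite /E /= in_itv /=.
      by move=> [-> fgu]; split=> //; rewrite fgu subrr.
    by move=> [-> /subr0_eq].
  apply: closedI; first exact: interval_closed.
  apply: preimage_closed => [u _|]; last exact: finite_set_closed (finite_set1 _).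
  by apply: cvgB; [exact: fc|exact: gc].
have [/andP[ssup supt] fgsup] : E (sup E).
  by rewrite {1}(closure_id E).1 //; apply: closure_sup; case: hE.
exists (sup E); split=> //.
  by rewrite lt_neqAle supt andbT; apply: contra_neq fgt => <-.
move=> u /andP[supu ut]; apply/eqP => fgu.
have /(sup_upper_bound hE) : E u by split; rewrite // ut (le_trans ssup) ?ltW.
by rewrite leNgt supu.
Qed.

End NormedSpace.

Lemma negligible_bigcup_countable d (T : measurableType d) (R : realType)
    (mu : {measure set T -> \bar R}) (I : countType) (F : I -> set T) :
  (forall i, mu.-negligible (F i)) -> mu.-negligible (\bigcup_i F i).
Proof.
move=> nF; have -> : \bigcup_i F i = \bigcup_m oapp F set0 (unpickle m).
  apply/seteqP; split=> [t [i _ Fit]|t [m _]].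
    by exists (pickle i); rewrite ?pickleK.
  by case: (unpickle m) => // i Fit; exists i.
apply: negligible_bigcup => m.
by case: (unpickle m) => [i|]; [exact: nF|exact: negligible_set0].
Qed.

Lemma measure_setI_conull {d} {T : measurableType d} {R : realType}
    (mu : {measure set T -> \bar R}) {A G : set T} :
  measurable A -> measurable G -> mu.-negligible (~` G) -> mu (A `&` G) = mu A.
Proof.
move=> mA mG nG; rewrite [RHS](measureDI mu mA mG).
rewrite (measure_negligible (measurableD mA mG)) ?add0e //.
by apply: negligibleS nG => t [].
Qed.

Lemma measure_sum_dirac_conull {d} {T : measurableType d} {R : realType}
    (mu : {measure set T -> \bar R}) {N : nat} (g : 'I_N -> T) {A : set T} :
  injective g -> (forall i, measurable [set g i]) ->
  mu.-negligible (~` range g) -> measurable A ->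
  mu A = (\sum_(i < N) mu [set g i] * \d_(g i) A)%E.
Proof.
move=> ginj mg ng mA.
have rangeE (B : set T) :
    B `&` range g = \big[setU/set0]_(i < N) (B `&` [set g i]).
  apply/seteqP; split=> [t [Bt [i _ git]]|t].
    by rewrite (bigD1 i) //=; left; split.
  elim/big_rec: _ => [//|i C _ IH [Bti|/IH//]].
  by case: Bti => Bt ti; split=> //; exists i.
have mrange : measurable (range g).
  rewrite -[range g]setTI rangeE.
  by apply: bigsetU_measurable => i _; exact: measurableI.
rewrite -(measure_setI_conull mu mA mrange ng) rangeE.
rewrite measure_bigsetU_ord => [|i|i j _ _ [t [[_ ->] [_ /ginj ->]]]] //; last first.
  exact: measurableI.
apply: eq_bigr => i _; rewrite diracE.
have [/set_mem Agi|/negP Agi] := boolP (g i \in A).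
  by rewrite mule1; congr (mu _); apply/seteqP; split=> [t []//|t ->].
rewrite mule0 -(measure0 mu); congr (mu _); apply/seteqP; split=> // t [At ti].
by apply: Agi; apply/mem_set; rewrite -ti.
Qed.

Section Support.
Context {R : realType} {X : normedModType R}.

Lemma open_measurable_borel (U : set X) :
  open U -> measurable (U : set (borel X)).
Proof. exact: sub_sigma_algebra. Qed.

Lemma closed_measurable_borel (C : set X) :
  closed C -> measurable (C : set (borel X)).
Proof.
move=> cC; rewrite -[C]setCK; apply: measurableC.
by apply: open_measurable_borel; rewrite openC.
Qed.

Lemma set1_measurable_borel (z : X) : measurable ([set z] : set (borel X)).
Proof. by apply: closed_measurable_borel; exact: finite_set_closed (finite_set1 z). Qed.

Lemma closed_supp (mu : set (borel X) -> \bar R) : closed (supp mu).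
Proof.
rewrite -openC openE => y /existsNP[U /not_implyP[oU /not_implyP[Uy mU]]].
by apply: filterS (open_nbhs_nbhs (conj oU Uy)) => w Uw /(_ U oU Uw).
Qed.

Lemma measurable_supp (mu : set (borel X) -> \bar R) :
  measurable (supp mu : set (borel X)).
Proof. by apply: closed_measurable_borel; exact: closed_supp. Qed.

Lemma notin_supp_null_ball {mu : {measure set (borel X) -> \bar R}}
    {D : set X} {c : nat -> X} {y : X} :
  dense D -> D `<=` range c -> ~ supp mu y ->
  exists m k, ball (c m) k.+1%:R^-1 y /\ mu (ball (c m) k.+1%:R^-1) = 0%E.
Proof.
move=> dD Dc /existsNP[U /not_implyP[oU /not_implyP[Uy /negP]]].
rewrite -leNgt => mU0.
have /nbhs_ballP[r /= r0 yrU] := open_nbhs_nbhs (conj oU Uy).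
have [k kr] : exists k : nat, k.+1%:R^-1 < r / 2.
  have [k _ kr] := near_infty_natSinv_lt (PosNum (divr_gt0 r0 (ltr0Sn R 1))).
  by exists k; apply: kr => /=.
have [z [yz Dz]] : ball y k.+1%:R^-1 `&` D !=set0.
  by apply: dD; [exists y; exact: ballxx | exact: ball_open].
have [m _ cmz] := Dc z Dz; exists m, k; rewrite cmz; split; first exact: ball_sym.
apply/eqP; rewrite -measure_le0 (le_trans _ mU0) // le_measure ?inE //.
- by apply: open_measurable_borel; exact: ball_open.
- exact: open_measurable_borel.
move=> w zw; apply: yrU; apply: le_ball (ball_triangle yz zw).
by rewrite [leRHS]splitr lerD // ltW.
Qed.

Lemma supp_compl_negligible (hsep : separable X)
    (mu : {measure set (borel X) -> \bar R}) :
  mu.-negligible (~` supp mu).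
Proof.
have [D [/pcard_surjP[c Dc] dD]] := hsep.
pose B (p : nat * nat) := ball (c p.1) p.2.+1%:R^-1.
suff : mu.-negligible (\bigcup_p (B p `&` [set _ | mu (B p) = 0%E])).
  apply: negligibleS => y /(notin_supp_null_ball dD Dc)[m [k Bmk]].
  by exists (m, k).
apply: negligible_bigcup_countable => p.
have [Bp0|Bp] := pselect (mu (B p) = 0%E); last first.
  by rewrite (_ : _ `&` _ = set0); [exact: negligible_set0|apply/seteqP; split=> // w []].
have : mu.-negligible (B p).
  by apply/negligibleP => //; apply: open_measurable_borel; exact: ball_open.
by apply: negligibleS => w [].
Qed.

Lemma supp_compl_measure0 (hsep : separable X)
    (mu : {measure set (borel X) -> \bar R}) :
  mu (~` supp mu) = 0%E.
Proof.
apply/negligibleP; last exact: supp_compl_negligible.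
by apply: measurableC; exact: measurable_supp.
Qed.

Lemma supp_set1_gt0 (hsep : separable X)
    (mu : {measure set (borel X) -> \bar R}) (z : X) :
  finite_set (supp mu) -> supp mu z -> (0 < mu [set z])%E.
Proof.
move=> fS Sz; pose U := ~` (supp mu `\ z).
have oU : open U by rewrite openC; apply: finite_set_closed; exact: finite_setD.
apply: (lt_le_trans (Sz U oU _)) => [[_]|]; first exact.
have mSC : measurable (~` supp mu : set (borel X)).
  by apply: measurableC; exact: measurable_supp.
have mz := set1_measurable_borel z.
rewrite -[leRHS]adde0 -(supp_compl_measure0 hsep mu).
apply: le_trans (measureU2 _ mz mSC); apply: le_measure; rewrite ?inE.
- exact: open_measurable_borel.
- exact: measurableU mz mSC.
move=> w Uw; have [->|wz] := eqVneq w z; [by left|right => Sw].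
by apply: Uw; split=> //; exact/eqP.
Qed.

End Support.

Section Curves.
Context {R : realType} {X : normedModType R}.

Lemma ev_continuous (g : curve X) : continuous (fun t => ev t g).
Proof. by case: g => g gc; case: gc. Qed.

Lemma curve_eq (g h : curve X) :
  (forall t, 0 <= t -> ev t g = ev t h) -> g = h.
Proof.
case: g h => g [gc g0] [h [hc h0]] /= gh; apply: eq_exist; apply/funext => t.
have [t0|t0] := leP 0 t; first exact: gh.
by rewrite g0 ?h0 ?ltW //; exact: gh.
Qed.

Lemma measurable_ev (t : R) : 0 <= t ->
  measurable_fun [set: curve_borel X] (ev t : curve_borel X -> borel X).
Proof.
move=> t0; apply: measurability; first reflexivity.
move=> _ [U oU <-]; apply: sub_sigma_algebra; rewrite setTI => g /= Ug.
have /nbhs_ballP[e /= e0 eU] := open_nbhs_nbhs (conj oU Ug).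
exists t, e; split=> // h ht; apply: eU.
by rewrite -ball_normE /ball_ /= distrC; apply: ht; rewrite t0 lexx.
Qed.

Lemma measurable_ev_preimage (t : R) (A : set (borel X)) : 0 <= t ->
  measurable A -> measurable (ev t @^-1` A : set (curve_borel X)).
Proof. by move=> t0 mA; rewrite -[_ @^-1` _]setTI; exact: measurable_ev. Qed.

End Curves.

(* Only rational times, so that [supp_curves mu] is measurable;
   [supp_curves_supp] extends the constraint to every real time t >= 0. *)
Definition supp_curves {R : realType} {X : normedModType R}
    (mu : R -> probability (borel X) R) : set (curve X) :=
  \bigcap_(q in [set q : rat | 0 <= q]) (ev (ratr q) @^-1` supp (mu (ratr q))).

Section SupportedCurves.
Context {R : realType} {X : normedModType R}.
Context {mu : R -> probability (borel X) R} {n : R -> nat}.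
Hypothesis card_supp : forall t, 0 <= t -> (supp (mu t) #= `I_(n t))%card.
Hypothesis n_nonincr : forall s t, 0 <= s -> s <= t -> (n t <= n s)%N.

Lemma supp_curves_card {I : finType} (c : I -> curve X) {s : R} :
  0 <= s -> (forall i, supp_curves mu (c i)) ->
  (forall i j, i != j -> \forall u \near s^'+, ev u (c i) != ev u (c j)) ->
  (#|I| <= n s)%N.
Proof.
move=> s0 Sc sep.
have : \forall u \near s^'+,
    forall p : I * I, p.1 != p.2 -> ev u (c p.1) != ev u (c p.2).
  apply: filter_forall => -[i j] /=; have [<-|ij] := eqVneq i j.
    by apply: nearW => u; rewrite eqxx.
  by apply: filterS (sep i j ij) => u + _.
move=> /near_right_rat[q sq qsep].
have q0 : 0 <= q by rewrite -(ler0q R) (le_trans s0) ?ltW.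
apply: (leq_trans _ (n_nonincr _ _ s0 (ltW sq))).
apply: (leq_card_inj_into (fun i => ev (ratr q) (c i)) (card_supp _ _)).
- by rewrite ler0q.
- move=> i j cij; apply/eqP; apply: contraT => ij.
  by have := qsep (i, j) ij; rewrite cij eqxx.
- by move=> i; apply: Sc.
Qed.

Hypothesis supp_hit : forall t z, 0 <= t -> supp (mu t) z ->
  exists2 g, supp_curves mu g & ev t g = z.

Lemma supp_curves_enum {t : R} : 0 <= t ->
  exists r : 'I_(n t) -> curve X,
    [/\ forall j, supp_curves mu (r j), injective (fun j => ev t (r j))
      & range (fun j => ev t (r j)) = supp (mu t)].
Proof.
move=> t0; have /card_set_bijP[f [fS finj fsurj]] := card_esym (card_supp _ t0).
have hit (j : 'I_(n t)) : exists g, supp_curves mu g /\ ev t g = f j.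
  by have [g Sg gf] := supp_hit _ _ t0 (fS _ (ltn_ord j)); exists g.
have [r rf] := choice hit.
exists r; split=> [j|i j|]; first by case: (rf j).
  rewrite (rf i).2 (rf j).2 => /finj fij; apply: val_inj.
  by apply: fij; apply/mem_set; exact: ltn_ord.
apply/seteqP; split=> [_ [j _ <-]|z /fsurj[j jn <-]].
  by rewrite (rf j).2; exact: fS _ (ltn_ord j).
by exists (Ordinal jn) => //; rewrite (rf _).2.
Qed.

Lemma supp_curves_supp {t : R} {g : curve X} :
  0 <= t -> supp_curves mu g -> supp (mu t) (ev t g).
Proof.
move=> t0 Sg; apply: contrapT => gNS.
have [r [Sr rinj rS]] := supp_curves_enum t0.
have rNg j : ev t (r j) != ev t g.
  by apply/eqP => rg; apply: gNS; rewrite -rg -rS; exists j.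
pose c (o : option 'I_(n t)) := if o is Some j then r j else g.
suff : (#|{: option 'I_(n t)}| <= n t)%N by rewrite card_option card_ord ltnn.
apply: (supp_curves_card c t0) => [[j|]|o1 o2 o12]; [exact: Sr|exact: Sg|].
apply: near_at_right; apply: near_neq; [exact: ev_continuous..|].
move: o12; case: o1 => [i|]; case: o2 => [j|] //= ij.
- by rewrite (inj_eq rinj).
- by rewrite eq_sym.
Qed.

Lemma supp_curves_coalesce {g h : curve X} {s t : R} :
  0 <= s -> s <= t -> supp_curves mu g -> supp_curves mu h ->
  ev s g = ev s h -> ev t g = ev t h.
Proof.
move=> s0 st Sg Sh gs; apply/eqP; apply: contraT => gt.
have [sg [ssg sgt gsg gh_after]] :=
  last_coincidence (ev_continuous g) (ev_continuous h) st gs gt.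
have sg0 := le_trans s0 ssg.
have gh_sep : \forall u \near sg^'+, ev u g != ev u h.
  near=> u; apply: gh_after; apply/andP; split; near: u;
    [exact: nbhs_right_gt | exact: nbhs_right_le].
have [r [Sr rinj rS]] := supp_curves_enum sg0.
have [j0 _ rj0] : range (fun j => ev sg (r j)) (ev sg g).
  by rewrite rS; exact: supp_curves_supp.
(* The curves r, with g in place of r j0, plus h: at time sg only g and h
   collide, and they separate right after sg. *)
pose c (o : option 'I_(n sg)) :=
  if o is Some j then (if j == j0 then g else r j) else h.
pose pos (o : option 'I_(n sg)) := if o is Some j then j else j0.
have c_sg o : ev sg (c o) = ev sg (r (pos o)).
  by case: o => [j|] /=; [case: eqP => [->|] | rewrite rj0 gsg].
suff : (#|{: option 'I_(n sg)}| <= n sg)%N by rewrite card_option card_ord ltnn.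
apply: (supp_curves_card c sg0) => [[j|]|o1 o2 o12].
- by rewrite /=; case: eqP.
- exact: Sh.
have [pos12|pos_neq] := eqVneq (pos o1) (pos o2); last first.
  apply: near_at_right; apply: near_neq; [exact: ev_continuous..|].
  by rewrite !c_sg (inj_eq rinj).
move: o12 pos12; case: o1 => [i|]; case: o2 => [j|] //= ij.
- by move=> eij; rewrite eij eqxx in ij.
- by move=> ->; rewrite eqxx.
- by move=> <-; rewrite eqxx; apply: filterS gh_sep => u; rewrite eq_sym.
Unshelve. all: by end_near.
Qed.

Lemma supp_curves_eq (g h : curve X) :
  supp_curves mu g -> supp_curves mu h -> ev 0 g = ev 0 h -> g = h.
Proof.
move=> Sg Sh gh0; apply: curve_eq => t t0.
exact: (supp_curves_coalesce (lexx 0) t0).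
Qed.

End SupportedCurves.

Section SupportedCurvesMeasure.
Context {R : realType} {X : normedModType R}.
Context {mu : R -> probability (borel X) R}.

Lemma measurable_supp_curves :
  measurable (supp_curves mu : set (curve_borel X)).
Proof.
rewrite -[supp_curves mu]setCK setC_bigcap bigcup_mkcond; apply: measurableC.
apply: bigcupT_measurable_rat => q.
case: ifPn => [/set_mem q0|_]; last exact: measurable0.
apply: measurableC; apply: measurable_ev_preimage; first by rewrite ler0q.
exact: measurable_supp.
Qed.

Context {eta : probability (curve_borel X) R}.
Hypothesis hsep : separable X.
Hypothesis eta_marginals : forall t, 0 <= t -> push_ev t eta (mu t).

Lemma supp_curves_conull : eta.-negligible (~` supp_curves mu).
Proof.
rewrite setC_bigcap bigcup_mkcond; apply: negligible_bigcup_countable => q.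
case: ifPn => [/set_mem q0|_]; last exact: negligible_set0.
have q0' : 0 <= ratr q :> R by rewrite ler0q.
have mSC : measurable (~` supp (mu (ratr q)) : set (borel X)).
  by apply: measurableC; exact: measurable_supp.
rewrite preimage_setC; apply/negligibleP; first exact: measurable_ev_preimage.
rewrite -(supp_compl_measure0 hsep (mu (ratr q))); exact: eta_marginals.
Qed.

Lemma supp_curves_through {t : R} {z : X} :
  0 <= t -> (0 < mu t [set z])%E -> exists2 g, supp_curves mu g & ev t g = z.
Proof.
move=> t0 mz.
pose E : set (curve_borel X) := ev t @^-1` ([set z] : set (borel X)).
have mE : measurable E by exact: measurable_ev_preimage (set1_measurable_borel z).
have : (0 < eta (E `&` supp_curves mu))%E.
  rewrite measure_setI_conull //; last exact: supp_curves_conull.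
  - by rewrite -(eta_marginals _ t0 _ (set1_measurable_borel z)) in mz.
  - exact: measurable_supp_curves.
apply: contraPP => noG; suff -> : E `&` supp_curves mu = set0.
  by rewrite measure0 ltxx.
by apply/seteqP; split=> // g [gz Sg]; apply: noG; exists g.
Qed.

End SupportedCurvesMeasure.

Section DiracInitialDatum.
Context {R : realType} {X : normedModType R}.
Context {N : nat} {a : 'I_N -> R} {x : 'I_N -> X}.
Context {nu : set (borel X) -> \bar R}.
Hypothesis nuE : forall A : set (borel X), measurable A ->
  nu A = (\sum_(i < N) (a i)%:E * \d_(x i : borel X) A)%E.

Lemma supp_sum_dirac_sub : supp nu `<=` range x.
Proof.
move=> y Sy; apply: contrapT => yNx.
have oU : open (~` range x).
  by rewrite openC; apply: finite_set_closed; exact/finite_image/finite_finset.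
have := Sy _ oU yNx; rewrite nuE; last exact: open_measurable_borel.
rewrite big1 ?ltxx // => i _; rewrite diracE memNset ?mule0 //=.
by apply; exists i.
Qed.

Lemma sum_dirac_set1 : injective x -> forall i, nu [set x i] = (a i)%:E.
Proof.
move=> xinj i; rewrite nuE; last exact: set1_measurable_borel.
rewrite (bigD1 i) //= big1 ?adde0 => [|j ji].
  by rewrite diracE mem_set // mule1.
by rewrite diracE memNset ?mule0 // => /xinj eji; rewrite eji eqxx in ji.
Qed.

End DiracInitialDatum.

Section Representation.
Context {R : realType} {X : normedModType R}.
Context {N : nat} {a : 'I_N -> R} {x : 'I_N -> X}.
Context {mu : R -> probability (borel X) R} {n : R -> nat}.
Hypothesis hsep : separable X.
Hypothesis a_gt0 : forall i, 0 < a i.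
Hypothesis x_inj : injective x.
Hypothesis mu0E : forall A : set (borel X), measurable A ->
  mu 0 A = (\sum_(i < N) (a i)%:E * \d_(x i : borel X) A)%E.
Hypothesis card_supp : forall t, 0 <= t -> (supp (mu t) #= `I_(n t))%card.
Hypothesis n_nonincr : forall s t, 0 <= s -> s <= t -> (n t <= n s)%N.
Context {eta : probability (curve_borel X) R}.
Hypothesis eta_marginals : forall t, 0 <= t -> push_ev t eta (mu t).

Lemma supp_hit_of_marginals (t : R) (z : X) :
  0 <= t -> supp (mu t) z -> exists2 g, supp_curves mu g & ev t g = z.
Proof.
move=> t0 Sz; apply: (supp_curves_through hsep eta_marginals t0).
apply: (supp_set1_gt0 hsep) => //; exists (n t); exact: card_supp.
Qed.

Let supp_eq := supp_curves_eq card_supp n_nonincr supp_hit_of_marginals.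

Lemma supp_curves_start {g : curve X} :
  supp_curves mu g -> exists i, ev 0 g = x i.
Proof.
move=> Sg.
have [i _ <-] := supp_sum_dirac_sub mu0E _
  (supp_curves_supp card_supp n_nonincr supp_hit_of_marginals (lexx 0) Sg).
by exists i.
Qed.

Lemma supp_curves_from (i : 'I_N) :
  exists g, supp_curves mu g /\ ev 0 g = x i.
Proof.
have [|g Sg g0] := supp_curves_through hsep eta_marginals (lexx 0) (z := x i).
  by rewrite (sum_dirac_set1 mu0E x_inj) lte_fin.
by exists g.
Qed.

Lemma marginals_sum_dirac : exists gam : 'I_N -> curve X,
  [/\ forall i, supp_curves mu (gam i), forall i, ev 0 (gam i) = x i
    & forall A : set (curve_borel X), measurable A ->
        eta A = (\sum_(i < N) (a i)%:E * \d_(gam i : curve_borel X) A)%E].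
Proof.
have [gam gamP] := choice supp_curves_from.
have Sgam i := (gamP i).1; have gam0 i := (gamP i).2.
have gam_set1 i : [set gam i] = ev 0 @^-1` [set x i] `&` supp_curves mu.
  apply/seteqP; split=> [_ ->|g [/= g0 Sg]]; first by split; [exact: gam0|exact: Sgam].
  by apply: supp_eq => //; rewrite g0 gam0.
have mx0 i : measurable (ev 0 @^-1` ([set x i] : set (borel X)) : set (curve_borel X)).
  exact: measurable_ev_preimage (set1_measurable_borel _).
exists gam; split=> // A mA.
rewrite (measure_sum_dirac_conull eta gam _ _ _ mA).
- apply: eq_bigr => i _; congr (_ * _)%E.
  rewrite gam_set1 measure_setI_conull //; last exact: supp_curves_conull.
  + rewrite -(sum_dirac_set1 mu0E x_inj i).
    by apply: eta_marginals => //; exact: set1_measurable_borel.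
  + exact: measurable_supp_curves.
- by move=> i j /(congr1 (ev 0)); rewrite !gam0 => /x_inj.
- move=> i; rewrite gam_set1; apply: measurableI => //.
  exact: measurable_supp_curves.
- apply: negligibleS (supp_curves_conull hsep eta_marginals) => g gNr Sg.
  have [i g0] := supp_curves_start Sg.
  by apply: gNr; exists i => //; apply: supp_eq => //; rewrite g0 gam0.
Qed.

End Representation.

Theorem theoremB1 (R : realType) (X : completeNormedModType R)
  (ip : X -> X -> R) (hip : is_inner_product ip) (hsep : separable X)
  (N : nat) (hN : (1 <= N)%N) (a : 'I_N -> R) (x : 'I_N -> X)
  (ha : forall i, 0 < a i) (hsum : \sum_(i < N) a i = 1)
  (hx : injective x)
  (mu : R -> probability (borel X) R)
  (hmu2 : forall t, 0 <= t -> finite_second_moment (mu t))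
  (hmu0 : forall A : set (borel X), measurable A ->
     mu 0 A = (\sum_(i < N) (a i)%:E * \d_(x i : borel X) A)%E)
  (hcard : exists n : R -> nat,
     (forall t, 0 <= t -> (supp (mu t) #= `I_(n t))%card) /\
     (forall s t, 0 <= s -> s <= t -> (n t <= n s)%N)) :
  (forall eta : probability (curve_borel X) R,
     (forall t, 0 <= t -> push_ev t eta (mu t)) ->
     exists gam : 'I_N -> curve X,
       (forall A : set (curve_borel X), measurable A ->
          eta A = (\sum_(i < N) (a i)%:E * \d_(gam i : curve_borel X) A)%E) /\
       injective gam /\
       (forall i, ev 0 (gam i) = x i) /\
       (forall (i j : 'I_N) (s : R), i != j -> 0 <= s ->
          ev s (gam i) = ev s (gam j) ->
          forall t, s <= t -> ev t (gam i) = ev t (gam j)))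
  /\
  (forall eta1 eta2 : probability (curve_borel X) R,
     (forall t, 0 <= t -> push_ev t eta1 (mu t)) ->
     (forall t, 0 <= t -> push_ev t eta2 (mu t)) ->
     forall A : set (curve_borel X), measurable A -> eta1 A = eta2 A).
Proof.
have [n [hn hmono]] := hcard.
have hit eta (heta : forall t, 0 <= t -> push_ev t eta (mu t)) :=
  supp_hit_of_marginals hsep hn heta.
split=> [eta heta|eta1 eta2 h1 h2 A mA].
  have [gam [Sgam gam0 etaE]] := marginals_sum_dirac hsep ha hx hmu0 hn hmono heta.
  exists gam; split=> //; split.
    by move=> i j /(congr1 (ev 0)); rewrite !gam0 => /hx.
  split=> // i j s _ s0 gs t st.
  exact: (supp_curves_coalesce hn hmono (hit _ heta) s0 st).
have [g1 [S1 g10 eta1E]] := marginals_sum_dirac hsep ha hx hmu0 hn hmono h1.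
have [g2 [S2 g20 eta2E]] := marginals_sum_dirac hsep ha hx hmu0 hn hmono h2.
rewrite eta1E // eta2E //; suff -> : g1 = g2 by [].
apply/funext => i; apply: (supp_curves_eq hn hmono (hit _ h1)) => //.
by rewrite g10 g20.
Qed.
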